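(* Let $S$ be a semigroup, let $a\in S$, and define $P=\{x\in Sa : x\,\mathscr L\, ax\}$. Then the set of regular elements of the semigroup $Sa$ is $$\operatorname{Reg}(Sa)=\operatorname{Reg}(S)\cap P.$$
   Context: $Sa=\{xa:x\in S\}$ is the principal left ideal generated by $a$, regarded as a semigroup in its own right. For a semigroup $T$, $\operatorname{Reg}(T)=\{x\in T: x=xyx \text{ for some } y\in T\}$. $\mathscr L$ denotes Green's $\mathscr L$-relation on $S$: $x\,\mathscr L\, y$ iff $S^1x=S^1y$, where $S^1$ is $S$ with an identity adjoined if $S$ is not a monoid. *)

Definition in_Sa {S : Type} (mul : S -> S -> S) (a x : S) : Prop :=
  exists s : S, x = mul s a.

(* Membership in S^1 x (with S^1 = S with an identity adjoined):
   z \in S^1 x  iff  z = x  or  z = s x for some s in S. *)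
Definition in_S1x {S : Type} (mul : S -> S -> S) (x z : S) : Prop :=
  z = x \/ exists s : S, z = mul s x.

Definition greenL {S : Type} (mul : S -> S -> S) (x y : S) : Prop :=
  forall z : S, in_S1x mul x z <-> in_S1x mul y z.

Definition regular {S : Type} (mul : S -> S -> S) (x : S) : Prop :=
  exists y : S, x = mul (mul x y) x.

Definition regular_in_Sa {S : Type} (mul : S -> S -> S) (a x : S) : Prop :=
  in_Sa mul a x /\ exists y : S, in_Sa mul a y /\ x = mul (mul x y) x.

Definition inP {S : Type} (mul : S -> S -> S) (a x : S) : Prop :=
  in_Sa mul a x /\ greenL mul x (mul a x).

From Stdlib Require Import Setoid.

(* Since a x always lies in S^1 x, the relation x L a x reduces to x in S^1 a x.
   Writing y = s a, the condition x = x y x with y in S a is x = (x s)(a x), which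
   puts x in S^1 a x; conversely, if x = x y x and x = t a x with t in S^1, then
   x = x (y t a) x with y t a in S a. *)

Section PrincipalLeftIdeal.

Variables (S : Type) (mul : S -> S -> S).
Hypothesis mulA : forall x y z : S, mul x (mul y z) = mul (mul x y) z.

Lemma in_S1x_mull (x s : S) : in_S1x mul x (mul s x).
Proof. right; exists s; reflexivity. Qed.

Lemma in_S1x_trans (x y z : S) :
  in_S1x mul x y -> in_S1x mul y z -> in_S1x mul x z.
Proof.
  intros Hxy [-> | [s ->]]; [exact Hxy|].
  destruct Hxy as [-> | [t ->]]; right.
  - exists s; reflexivity.
  - exists (mul s t); apply mulA.
Qed.

Lemma greenLP (x y : S) : greenL mul x y <-> in_S1x mul y x /\ in_S1x mul x y.
Proof.
  split.
  - intros HL; split.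
    + apply HL; left; reflexivity.
    + apply HL; left; reflexivity.
  - intros [Hyx Hxy] z; split; [apply in_S1x_trans; exact Hyx|].
    apply in_S1x_trans; exact Hxy.
Qed.

Lemma greenL_mull_iff (a x : S) :
  greenL mul x (mul a x) <-> in_S1x mul (mul a x) x.
Proof.
  rewrite greenLP; split; [intros [H _]; exact H|].
  intros H; split; [exact H | apply in_S1x_mull].
Qed.

Lemma regular_in_SaP (a x : S) :
  regular_in_Sa mul a x <->
  in_Sa mul a x /\ exists s : S, x = mul (mul x s) (mul a x).
Proof.
  split.
  - intros [Hx [y [[s ->] Hr]]]; split; [exact Hx|].
    exists s; rewrite Hr at 1; rewrite !mulA; reflexivity.
  - intros [Hx [s Hs]]; split; [exact Hx|].
    exists (mul s a); split; [exists s; reflexivity|].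
    rewrite Hs at 1; rewrite !mulA; reflexivity.
Qed.

Lemma regular_in_S1x_factor (a x : S) :
  regular mul x -> in_S1x mul (mul a x) x ->
  exists s : S, x = mul (mul x s) (mul a x).
Proof.
  intros [y Hr] [Hax | [t Hax]].
  - exists y; rewrite Hr at 1; rewrite Hax at 2; reflexivity.
  - exists (mul y t); rewrite Hr at 1; rewrite Hax at 2; rewrite !mulA; reflexivity.
Qed.

End PrincipalLeftIdeal.

Theorem theorem3p2 (S : Type) (mul : S -> S -> S)
  (mulA : forall x y z : S, mul x (mul y z) = mul (mul x y) z)
  (a : S) :
  forall x : S, regular_in_Sa mul a x <-> (regular mul x /\ inP mul a x).
Proof.
  intros x; unfold inP; rewrite greenL_mull_iff, regular_in_SaP by exact mulA.
  split.
  - intros [Hx [s Hs]]; repeat split; [| exact Hx |].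
    + exists (mul s a); rewrite Hs at 1; rewrite !mulA; reflexivity.
    + right; exists (mul x s); exact Hs.
  - intros [Hreg [Hx Hax]]; split; [exact Hx|].
    apply regular_in_S1x_factor; assumption.
Qed.
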